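(* A finite idempotent algebra $\mathbf{A}$ lies in a congruence distributive variety (equivalently, $\mathbf{A}$ has directed Jónsson terms) if and only if $\{a\}$ Jónsson absorbs $\mathbf{A}$ for every $a\in A$.
   Context: Directed Jónsson terms: ternary terms $d_0,\dots,d_n$ with $d_0(x,y,z)=x$, $d_n(x,y,z)=z$, $d_i(x,y,y)=d_{i+1}(x,x,y)$ for $i<n$, and $d_i(x,y,x)=x$ for all $i$. Jónsson absorption: a subuniverse $B$ of $\mathbf{A}$ Jónsson absorbs $\mathbf{A}$ if there are ternary terms $d_0,\dots,d_n$ of $\mathbf{A}$ such that $d_i(b,a,b')\in B$ for all $i$, all $b,b'\in B$, $a\in A$; $d_i(x,y,y)=d_{i+1}(x,x,y)$ for all $i<n$ and all $x,y\in A$; $d_0(x,y,z)=x$ and $d_n(x,y,z)=z$ for all $x,y,z\in A$. An algebra is idempotent if every basic operation $f$ satisfies $f(x,\dots,x)\approx x$. *)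

From mathcomp Require Import all_boot.
Set Implicit Arguments. Unset Strict Implicit. Unset Printing Implicit Defensive.

(* An algebra is given by a finite carrier T, an index type I of basic
   operation symbols, arities ar, and the interpretation f of each symbol:
   f i : ('I_(ar i) -> T) -> T. *)

Inductive term (I : Type) (ar : I -> nat) (V : Type) : Type :=
| Var : V -> term ar V
| App : forall i : I, ('I_(ar i) -> term ar V) -> term ar V.

Fixpoint eval (T : Type) (I : Type) (ar : I -> nat)
  (f : forall i : I, ('I_(ar i) -> T) -> T) (V : Type) (e : V -> T)
  (t : term ar V) : T :=
  match t with
  | Var v => e v
  | App i g => f i (fun j => eval f e (g j))
  end.

Definition teval3 (T : Type) (I : Type) (ar : I -> nat)
  (f : forall i : I, ('I_(ar i) -> T) -> T) (t : term ar 'I_3) (x y z : T) : T :=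
  eval f (fun v : 'I_3 => nth x [:: x; y; z] v) t.

Definition idempotent_alg (T : Type) (I : Type) (ar : I -> nat)
  (f : forall i : I, ('I_(ar i) -> T) -> T) : Prop :=
  forall (i : I) (x : T), f i (fun _ => x) = x.

Definition is_subuniverse (T : finType) (I : Type) (ar : I -> nat)
  (f : forall i : I, ('I_(ar i) -> T) -> T) (B : {set T}) : Prop :=
  forall (i : I) (args : 'I_(ar i) -> T),
    (forall j, args j \in B) -> f i args \in B.

Definition directed_Jonsson_terms (T : Type) (I : Type) (ar : I -> nat)
  (f : forall i : I, ('I_(ar i) -> T) -> T) (n : nat) (d : nat -> term ar 'I_3)
  : Prop :=
  [/\ forall x y z : T, teval3 f (d 0) x y z = x,
      forall x y z : T, teval3 f (d n) x y z = z,
      forall i, i < n -> forall x y : T, teval3 f (d i) x y y = teval3 f (d i.+1) x x y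
    & forall i, i <= n -> forall x y : T, teval3 f (d i) x y x = x].

Definition has_directed_Jonsson_terms (T : Type) (I : Type) (ar : I -> nat)
  (f : forall i : I, ('I_(ar i) -> T) -> T) : Prop :=
  exists (n : nat) (d : nat -> term ar 'I_3), directed_Jonsson_terms f n d.

Definition Jonsson_absorbs (T : finType) (I : Type) (ar : I -> nat)
  (f : forall i : I, ('I_(ar i) -> T) -> T) (B : {set T}) : Prop :=
  is_subuniverse f B /\
  exists (n : nat) (d : nat -> term ar 'I_3),
    [/\ forall i, i <= n -> forall b b' a : T, b \in B -> b' \in B ->
            teval3 f (d i) b a b' \in B,
        forall i, i < n -> forall x y : T, teval3 f (d i) x y y = teval3 f (d i.+1) x x y,
        forall x y z : T, teval3 f (d 0) x y z = x
      & forall x y z : T, teval3 f (d n) x y z = z].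

From mathcomp Require Import all_boot.
From Stdlib Require Import FunctionalExtensionality.

Set Implicit Arguments. Unset Strict Implicit.

(* A Jonsson chain [d] absorbing [a] (i.e. d_i(a,y,a) = a) and one [e]
   absorbing [b] can be nested into the chain
   c_(q(m+1)+r)(x,y,z) = d_q(x, e_r(x,y,z), z), which absorbs both: d_q(x,_,x)
   = x outright, and e_r(x,y,x) = x turns c into d_q(x,x,x) = x by
   idempotence.  Nesting the chains absorbing each element of the finite
   carrier gives a chain absorbing every element, i.e. directed Jonsson terms.
   Conversely, directed Jonsson terms witness that every singleton Jonsson
   absorbs the algebra. *)

Section Terms.
Variables (T : Type) (I : Type) (ar : I -> nat)
  (f : forall i : I, ('I_(ar i) -> T) -> T).

Fixpoint subst (V W : Type) (g : V -> term ar W) (t : term ar V) : term ar W :=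
  match t with
  | Var v => g v
  | App i h => @App _ _ _ i (fun j => subst g (h j))
  end.

Lemma eval_subst V W (g : V -> term ar W) (e : W -> T) t :
  eval f e (subst g t) = eval f (fun v => eval f e (g v)) t.
Proof.
elim: t => [v|i h IH] //=.
by congr (@f i); apply: functional_extensionality => j; apply: IH.
Qed.

Lemma eval_const (Hidem : idempotent_alg f) V (t : term ar V) a :
  eval f (fun _ => a) t = a.
Proof.
elim: t => [v|i h IH] //=.
rewrite -[RHS](Hidem i); congr (@f i).
by apply: functional_extensionality => j; apply: IH.
Qed.

Lemma teval3_idem (Hidem : idempotent_alg f) t x : teval3 f t x x x = x.
Proof.
rewrite /teval3 -[RHS](eval_const Hidem t x); congr (eval f _ t).
by apply: functional_extensionality => -[[|[|[|v]]] Hv].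
Qed.

Definition subst_mid (e : term ar 'I_3) (t : term ar 'I_3) : term ar 'I_3 :=
  subst (fun v : 'I_3 => nth (Var ar ord0) [:: Var ar ord0; e; Var ar ord_max] v) t.

Lemma teval3_subst_mid t e x y z :
  teval3 f (subst_mid e t) x y z = teval3 f t x (teval3 f e x y z) z.
Proof.
rewrite /teval3 eval_subst; congr (eval f _ t).
by apply: functional_extensionality => -[[|[|[|v]]] Hv].
Qed.

End Terms.

Section Chains.
Variables (T : finType) (I : Type) (ar : I -> nat)
  (f : forall i : I, ('I_(ar i) -> T) -> T).
Hypothesis Hidem : idempotent_alg f.

Definition Jonsson_chain n (d : nat -> term ar 'I_3) :=
  [/\ forall x y z : T, teval3 f (d 0) x y z = x,
      forall x y z : T, teval3 f (d n) x y z = z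
    & forall i, i < n -> forall x y : T, teval3 f (d i) x y y = teval3 f (d i.+1) x x y].

Definition absorbing (A : {pred T}) n (d : nat -> term ar 'I_3) :=
  forall i, i <= n -> forall x y : T, x \in A -> teval3 f (d i) x y x = x.

Definition nest m (d e : nat -> term ar 'I_3) : nat -> term ar 'I_3 :=
  fun k => subst_mid (e (k %% m.+1)) (d (k %/ m.+1)).

Lemma nest_at m d e q r : r <= m ->
  nest m d e (q * m.+1 + r) = subst_mid (e r) (d q).
Proof.
move=> le_rm.
by rewrite /nest divnMDl // modnMDl divn_small // modn_small // addn0.
Qed.

Lemma nest_chain n m d e : Jonsson_chain n d -> Jonsson_chain m e ->
  Jonsson_chain (n * m.+1 + m) (nest m d e).
Proof.
move=> [d0 dn dl] [e0 en el]; split=> [x y z|x y z|k lt_k x y].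
- by rewrite -[0]/(0 * m.+1 + 0) nest_at // teval3_subst_mid.
- by rewrite nest_at // teval3_subst_mid en dn.
rewrite (divn_eq k m.+1) in lt_k *.
have le_rm : k %% m.+1 <= m by rewrite -ltnS ltn_pmod.
rewrite nest_at // teval3_subst_mid.
have [lt_rm|ge_rm] := ltnP (k %% m.+1) m.
  by rewrite -addnS nest_at // teval3_subst_mid el.
have eq_rm : k %% m.+1 = m by apply/eqP; rewrite eqn_leq le_rm.
have lt_qn : k %/ m.+1 < n by move: lt_k; rewrite eq_rm ltn_add2r ltn_mul2r.
rewrite eq_rm; have -> : (k %/ m.+1 * m.+1 + m).+1 = (k %/ m.+1).+1 * m.+1 + 0.
  by rewrite mulSn addn0 [RHS]addnC addnS.
by rewrite nest_at // teval3_subst_mid en e0 dl.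
Qed.

Lemma nest_absorbing (A B : {pred T}) n m d e :
  absorbing A n d -> absorbing B m e ->
  absorbing [predU A & B] (n * m.+1 + m) (nest m d e).
Proof.
move=> dA eB k le_k x y; rewrite (divn_eq k m.+1) in le_k *.
have le_rm : k %% m.+1 <= m by rewrite -ltnS ltn_pmod.
have le_qn : k %/ m.+1 <= n.
  rewrite -ltnS -(ltn_pmul2r (ltn0Sn m)).
  apply: leq_ltn_trans (leq_addr (k %% m.+1) _) _; apply: leq_ltn_trans le_k _.
  by rewrite mulSn addnC ltn_add2r.
rewrite nest_at // teval3_subst_mid inE => /orP[xA|xB]; first exact: dA.
by rewrite eB // teval3_idem.
Qed.

Lemma Jonsson_absorbs_set1 a : Jonsson_absorbs f [set a] ->
  exists n d, Jonsson_chain n d /\ absorbing [set a] n d.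
Proof.
case=> _ [n [d [dA dl d0 dn]]]; exists n, d; split=> // i le_i x y /set1P->.
by apply/set1P; apply: dA; rewrite ?set11.
Qed.

Hypothesis absorbs_set1 : forall a : T, Jonsson_absorbs f [set a].

Lemma exists_Jonsson_chain : exists n d, Jonsson_chain n d.
Proof.
case: (pickP (fun _ : T => true)) => [t _|empty].
  by have [n [d [chain_d _]]] := Jonsson_absorbs_set1 (absorbs_set1 t); exists n, d.
by exists 0, (fun _ => Var ar ord0); split=> // x; have := empty x.
Qed.

Lemma absorbing_chain_seq (s : seq T) :
  exists n d, Jonsson_chain n d /\ absorbing [pred x in s] n d.
Proof.
elim: s => [|a s [n [d [chain_d abs_d]]]].
  by have [n [d chain_d]] := exists_Jonsson_chain; exists n, d.
have [m [e [chain_e abs_e]]] := Jonsson_absorbs_set1 (absorbs_set1 a).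
exists (n * m.+1 + m), (nest m d e); split; first exact: nest_chain.
move=> k le_k x y xs; apply: (nest_absorbing abs_d abs_e) => //.
by rewrite !inE orbC in xs *.
Qed.

End Chains.

Theorem corollary2p4 (T : finType) (I : Type) (ar : I -> nat)
  (f : forall i : I, ('I_(ar i) -> T) -> T) (Hidem : idempotent_alg f) :
  has_directed_Jonsson_terms f <-> (forall a : T, Jonsson_absorbs f [set a]).
Proof.
split=> [[n [d [d0 dn dl dabs]]] a | absorbs_set1].
  split=> [i args /(_ _)/set1P args_a | ].
    by rewrite (functional_extensionality _ _ args_a) Hidem set11.
  by exists n, d; split=> // i le_i b b' y /set1P-> /set1P->; rewrite dabs ?set11.
have [n [d [[d0 dn dl] abs_d]]] := absorbing_chain_seq Hidem absorbs_set1 (enum T).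
by exists n, d; split=> // i le_i x y; apply: abs_d; rewrite ?mem_enum.
Qed.
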